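(* If $\Lambda$ is a Legendrian knot with $4|\operatorname{rot}(\Lambda)|+\operatorname{tb}(\Lambda)\ge 0$, then $$m(\Lambda)\ge\left\lceil\sqrt{4|\operatorname{rot}(\Lambda)|+\operatorname{tb}(\Lambda)}\right\rceil.$$
   Context: Legendrian knots are taken in the standard contact structure on $\mathbb{R}^3$ and represented by front ($xz$-) projections, which have cusps in place of vertical tangencies and in which the strand of more negative slope is the overstrand at every crossing. For an oriented front with $P$ positive crossings, $N$ negative crossings, $C$ cusps, $D$ downward-oriented and $U$ upward-oriented cusps, the Thurston–Bennequin number is $\operatorname{tb}=P-N-\frac12C$ and the rotation number is $\operatorname{rot}=\frac12(D-U)$ (Legendrian isotopy invariants; the sign of $\operatorname{rot}$ depends on orientation). Legendrian mosaic tiles: a square tile whose four edge midpoints are potential connection points; the tiles are $T_0$ (empty); $T_1,\dots,T_4$ (a single arc joining midpoints of two adjacent edges, one per pair of adjacent edges); $T_5,T_6$ (a segment joining midpoints of opposite edges); $T_7,T_8$ (two disjoint arcs each joining adjacent edges, using all four midpoints); $T_{10}$ (two crossing segments joining opposite edges). A Legendrian $n$-mosaic is an $n\times n$ array of these tiles with the array rotated $45^\circ$ counterclockwise so the strands form a front diagram (after rotation $T_2$, $T_4$ contain one cusp and $T_8$ two cusps; $T_1,T_3,T_7$ contain none; in $T_{10}$ the negative-slope strand is over). It is suitably connected if connection points agree across shared edges and none lies on the outer boundary. The mosaic number $m(\Lambda)$ of a Legendrian knot $\Lambda$ is the smallest $n$ such that some suitably connected Legendrian $n$-mosaic depicts a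 front of a Legendrian knot Legendrian isotopic to $\Lambda$. *)

From Stdlib Require Import Reals List Arith Bool.
Import ListNotations.

(* Edge midpoints of a tile in the (unrotated) array: North, East, South, West.
   After rotating the array 45 degrees counterclockwise, N is upper-left,
   E upper-right, S lower-right, W lower-left. *)
Inductive edge := EN | EE | ES | EW.

Definition opposite (e : edge) : edge :=
  match e with EN => ES | ES => EN | EE => EW | EW => EE end.

(* Legendrian mosaic tiles (T9 is not a Legendrian tile). *)
Inductive tile := T0 | T1 | T2 | T3 | T4 | T5 | T6 | T7 | T8 | T10.

(* Arcs N-W and E-S are the ones that become cusps after rotation
   (both endpoints on the left, resp. right); N-E and S-W do not.
   In T10, the N-S strand has negative slope after rotation and is the
   overstrand; the E-W strand has positive slope and is the understrand. *)
Definition arcs (t : tile) : list (edge * edge) :=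
  match t with
  | T0 => []
  | T1 => [(EN, EE)]
  | T2 => [(EN, EW)]
  | T3 => [(ES, EW)]
  | T4 => [(EE, ES)]
  | T5 => [(EN, ES)]
  | T6 => [(EE, EW)]
  | T7 => [(EN, EE); (ES, EW)]
  | T8 => [(EN, EW); (EE, ES)]
  | T10 => [(EN, ES); (EE, EW)]
  end.

(* A Legendrian n-mosaic: tile at row i (0 = top), column j (0 = left),
   only the entries with i, j < n matter. *)
Definition mosaic := nat -> nat -> tile.

Definition has_point (t : tile) (e : edge) : Prop :=
  exists a b, In (a, b) (arcs t) /\ (a = e \/ b = e).

Definition neighbor_in (n i j : nat) (e : edge) : option (nat * nat) :=
  match e with
  | EN => match i with 0 => None | S i' => Some (i', j) end
  | ES => if S i <? n then Some (S i, j) else None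
  | EE => if S j <? n then Some (i, S j) else None
  | EW => match j with 0 => None | S j' => Some (i, j') end
  end.

Definition suitably_connected (n : nat) (M : mosaic) : Prop :=
  forall i j e, i < n -> j < n -> has_point (M i j) e ->
    exists i' j', neighbor_in n i j e = Some (i', j') /\
                  has_point (M i' j') (opposite e).

(* An oriented traversal step: passing through the tile at (si,sj),
   entering at edge sin and leaving at edge sout. *)
Record step := mkStep { si : nat; sj : nat; sin : edge; sout : edge }.

Definition dstep : step := mkStep 0 0 EN EN.

Definition traverses (s : step) (ab : edge * edge) : Prop :=
  (sin s, sout s) = ab \/ (sout s, sin s) = ab.

Definition step_valid (n : nat) (M : mosaic) (s : step) : Prop :=
  si s < n /\ sj s < n /\
  exists ab, In ab (arcs (M (si s) (sj s))) /\ traverses s ab.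

(* Hence the mosaic depicts a (one-component) knot, and tr
   records an orientation of it. *)
Definition oriented_knot_traversal (n : nat) (M : mosaic) (tr : list step) : Prop :=
  tr <> [] /\
  (forall k, k < length tr -> step_valid n M (nth k tr dstep)) /\
  (forall k, k < length tr ->
     let s := nth k tr dstep in
     let s' := nth ((k + 1) mod length tr) tr dstep in
     neighbor_in n (si s) (sj s) (sout s) = Some (si s', sj s') /\
     sin s' = opposite (sout s)) /\
  (forall i j ab, i < n -> j < n -> In ab (arcs (M i j)) ->
     exists! k, k < length tr /\ si (nth k tr dstep) = i /\
                sj (nth k tr dstep) = j /\ traverses (nth k tr dstep) ab).

Definition is_T10 (t : tile) : bool := match t with T10 => true | _ => false end.
Definition is_N (e : edge) : bool := match e with EN => true | _ => false end.
Definition is_W (e : edge) : bool := match e with EW => true | _ => false end.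
Definition is_EorW (e : edge) : bool := match e with EE | EW => true | _ => false end.

(* step along the N-S strand (the overstrand in a crossing tile) *)
Definition NS_step (s : step) : bool :=
  match sin s, sout s with EN, ES | ES, EN => true | _, _ => false end.

Definition under_WtoE (tr : list step) (i j : nat) : option bool :=
  match find (fun s => Nat.eqb (si s) i && Nat.eqb (sj s) j && is_EorW (sin s)) tr with
  | Some s => Some (is_W (sin s))
  | None => None
  end.

(* Crossing sign (right-hand rule, over x under): the crossing is positive
   iff (over N->S and under W->E) or (over S->N and under E->W). *)
Definition crossing_sign_is (pos : bool) (M : mosaic) (tr : list step) (s : step) : bool :=
  is_T10 (M (si s) (sj s)) && NS_step s &&
  match under_WtoE tr (si s) (sj s) with
  | Some b => Bool.eqb (Bool.eqb (is_N (sin s)) b) pos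
  | None => false
  end.

Definition n_pos (M : mosaic) (tr : list step) : nat :=
  length (filter (crossing_sign_is true M tr) tr).
Definition n_neg (M : mosaic) (tr : list step) : nat :=
  length (filter (crossing_sign_is false M tr) tr).

(* cusps: traversing a N-W arc (left cusp) or an E-S arc (right cusp);
   downward iff N->W or E->S, upward iff W->N or S->E *)
Definition down_cusp (s : step) : bool :=
  match sin s, sout s with EN, EW | EE, ES => true | _, _ => false end.
Definition up_cusp (s : step) : bool :=
  match sin s, sout s with EW, EN | ES, EE => true | _, _ => false end.

Definition n_down (tr : list step) : nat := length (filter down_cusp tr).
Definition n_up (tr : list step) : nat := length (filter up_cusp tr).

Definition tb (M : mosaic) (tr : list step) : R :=
  (INR (n_pos M tr) - INR (n_neg M tr) - INR (n_down tr + n_up tr) / 2)%R.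
Definition rot (tr : list step) : R :=
  ((INR (n_down tr) - INR (n_up tr)) / 2)%R.

Definition Rceil (x : R) : Z := (- Int_part (- x))%Z.

From Stdlib Require Import Reals ZArith List Lia Lra Bool.
Import ListNotations.

(* Weigh each oriented step of the knot through a tile by
     3 [down cusp] - 5 [up cusp] + dh + 2 (sign of the crossing, charged to the overstrand),
   where h is the height of edge midpoints in the rotated front.  Along the closed knot dh
   sums to 0, so the total weight is 3D - 5U + 2P - 2N = 2 (tb + 4 rot); exchanging up and
   down cusps and negating dh gives 2 (tb - 4 rot) instead.  The dh term makes every tile
   carry weight at most 2: a cusp traversed downwards loses height, a straight strand is
   alone in its tile, and at a positive crossing the height changes of the two strands
   cancel.  Hence 2 (tb + 4 |rot|) <= 2 n^2. *)

Local Open Scope Z_scope.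

Fixpoint sumZ (f : nat -> Z) (m : nat) : Z :=
  match m with O => 0 | S m' => sumZ f m' + f m' end.

Lemma sumZ_ext f g m :
  (forall k, (k < m)%nat -> f k = g k) -> sumZ f m = sumZ g m.
Proof.
  induction m as [|m IH]; intros Hfg; cbn; [reflexivity|].
  rewrite IH by (intros; apply Hfg; lia). rewrite Hfg by lia. reflexivity.
Qed.

Lemma sumZ_le f g m :
  (forall k, (k < m)%nat -> f k <= g k) -> sumZ f m <= sumZ g m.
Proof.
  induction m as [|m IH]; intros Hfg; cbn; [lia|].
  specialize (IH (fun k Hk => Hfg k ltac:(lia))). specialize (Hfg m ltac:(lia)). lia.
Qed.

Lemma sumZ_add f g m : sumZ (fun k => f k + g k) m = sumZ f m + sumZ g m.
Proof. induction m; cbn; lia. Qed.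

Lemma sumZ_sub f g m : sumZ (fun k => f k - g k) m = sumZ f m - sumZ g m.
Proof. induction m; cbn; lia. Qed.

Lemma sumZ_scal c f m : sumZ (fun k => c * f k) m = c * sumZ f m.
Proof. induction m; cbn; lia. Qed.

Lemma sumZ_const c m : sumZ (fun _ => c) m = Z.of_nat m * c.
Proof. induction m; cbn [sumZ]; lia. Qed.

Lemma sumZ_succ_l f m : sumZ f (S m) = f O + sumZ (fun k => f (S k)) m.
Proof. induction m as [|m IH]; [cbn; lia|]. cbn [sumZ] in *. lia. Qed.

Lemma sumZ_swap (g : nat -> nat -> Z) a b :
  sumZ (fun k => sumZ (fun i => g i k) a) b = sumZ (fun i => sumZ (fun k => g i k) b) a.
Proof.
  induction b as [|b IH]; cbn.
  - symmetry. rewrite (sumZ_const 0). lia.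
  - rewrite IH, <- sumZ_add. reflexivity.
Qed.

Lemma sumZ_delta w a m :
  (a < m)%nat -> sumZ (fun k => if Nat.eqb a k then w k else 0) m = w a.
Proof.
  induction m as [|m IH]; intros Ha; [lia|]. cbn.
  destruct (Nat.eqb_spec a m) as [->|Hne].
  - rewrite (sumZ_ext _ (fun _ => 0)), sumZ_const; [lia|].
    intros k Hk. destruct (Nat.eqb_spec m k); [lia|reflexivity].
  - rewrite IH by lia. lia.
Qed.

Lemma sumZ_rotate f m :
  (0 < m)%nat -> sumZ (fun k => f ((k + 1) mod m)%nat) m = sumZ f m.
Proof.
  intros Hm. destruct m as [|m]; [lia|].
  rewrite (sumZ_succ_l f m). cbn [sumZ]. rewrite (sumZ_ext _ (fun k => f (S k))).
  - replace ((m + 1) mod S m)%nat with O; [lia|].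
    rewrite Nat.add_1_r, Nat.Div0.mod_same. reflexivity.
  - intros k Hk. f_equal. rewrite Nat.mod_small; lia.
Qed.

Lemma sumZ_select1 (p : nat -> bool) f m k1 :
  (k1 < m)%nat -> (forall k, (k < m)%nat -> p k = true <-> k = k1) ->
  sumZ (fun k => if p k then f k else 0) m = f k1.
Proof.
  intros Hk1 Hp. rewrite <- (sumZ_delta f k1 m Hk1).
  apply sumZ_ext. intros k Hk. specialize (Hp k Hk).
  destruct (p k), (Nat.eqb_spec k1 k); subst; try reflexivity.
  - exfalso. intuition.
  - discriminate (proj2 Hp eq_refl).
Qed.

Lemma sumZ_select2 (p : nat -> bool) f m k1 k2 :
  (k1 < m)%nat -> (k2 < m)%nat -> k1 <> k2 ->
  (forall k, (k < m)%nat -> p k = true <-> k = k1 \/ k = k2) ->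
  sumZ (fun k => if p k then f k else 0) m = f k1 + f k2.
Proof.
  intros Hk1 Hk2 Hne Hp.
  rewrite <- (sumZ_delta f k1 m Hk1), <- (sumZ_delta f k2 m Hk2), <- sumZ_add.
  apply sumZ_ext. intros k Hk. specialize (Hp k Hk).
  destruct (p k), (Nat.eqb_spec k1 k), (Nat.eqb_spec k2 k); subst; try lia.
  all: exfalso; intuition.
Qed.

Definition trsum (tr : list step) (w : step -> Z) : Z :=
  sumZ (fun k => w (nth k tr dstep)) (length tr).

Lemma trsum_add tr f g : trsum tr (fun s => f s + g s) = trsum tr f + trsum tr g.
Proof. apply sumZ_add. Qed.

Lemma trsum_sub tr f g : trsum tr (fun s => f s - g s) = trsum tr f - trsum tr g.
Proof. apply sumZ_sub. Qed.

Lemma trsum_scal tr c f : trsum tr (fun s => c * f s) = c * trsum tr f.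
Proof. apply sumZ_scal. Qed.

Lemma trsum_count (p : step -> bool) tr :
  trsum tr (fun s => Z.b2z (p s)) = Z.of_nat (length (filter p tr)).
Proof.
  unfold trsum. induction tr as [|s tr IH]; [reflexivity|].
  cbn [length]. rewrite sumZ_succ_l. cbn [nth]. rewrite IH.
  cbn [filter]. destruct (p s); cbn [length Z.b2z]; lia.
Qed.

Lemma traverses_sin s a b : traverses s (a, b) -> sin s = a \/ sin s = b.
Proof. intros [H|H]; injection H as H1 H2; auto. Qed.

Lemma traverses_disjoint s a b c d :
  a <> c -> a <> d -> traverses s (a, b) -> ~ traverses s (c, d).
Proof.
  destruct s as [i j x y]. unfold traverses. cbn.
  intros Hac Had [H|H] [H'|H']; injection H as <- <-; injection H' as <- <-; auto.
Qed.

Lemma traverses_turn s a b : traverses s (a, b) -> b <> opposite a -> sout s <> opposite (sin s).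
Proof.
  destruct s as [i j x y]. unfold traverses. cbn.
  intros [H|H]; injection H as <- <-; destruct x, y; cbn; congruence.
Qed.

Definition at_cell (s : step) (i j : nat) : bool := Nat.eqb (si s) i && Nat.eqb (sj s) j.

Lemma at_cellP s i j : at_cell s i j = true <-> si s = i /\ sj s = j.
Proof. unfold at_cell. rewrite andb_true_iff, !Nat.eqb_eq. reflexivity. Qed.

Definition cell_sum (tr : list step) (w : step -> Z) (i j : nat) : Z :=
  trsum tr (fun s => if at_cell s i j then w s else 0).

Lemma trsum_by_cells n tr w :
  (forall k, (k < length tr)%nat -> (si (nth k tr dstep) < n /\ sj (nth k tr dstep) < n)%nat) ->
  trsum tr w = sumZ (fun i => sumZ (fun j => cell_sum tr w i j) n) n.
Proof.
  intros Hrange. unfold cell_sum, trsum.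
  rewrite (sumZ_ext _ (fun k => sumZ (fun i => sumZ (fun j =>
      if at_cell (nth k tr dstep) i j then w (nth k tr dstep) else 0) n) n)).
  - rewrite sumZ_swap. apply sumZ_ext. intros i _. apply sumZ_swap.
  - intros k Hk. destruct (Hrange k Hk) as [Hi Hj]. unfold at_cell. symmetry.
    rewrite (sumZ_ext _ (fun i => if Nat.eqb (si (nth k tr dstep)) i then w (nth k tr dstep) else 0)).
    + exact (sumZ_delta (fun _ => w (nth k tr dstep)) _ n Hi).
    + intros i _. destruct (Nat.eqb (si (nth k tr dstep)) i); cbn [andb].
      * exact (sumZ_delta (fun _ => w (nth k tr dstep)) _ n Hj).
      * rewrite sumZ_const. lia.
Qed.

Definition edge_height (e : edge) : Z := match e with EN | EE => 1 | ES | EW => -1 end.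

(* Twice the height of the midpoint of edge [e] of cell (i, j) in the rotated front, up to
   a constant: after the rotation, height grows with the column and decreases with the row. *)
Definition height (i j : nat) (e : edge) : Z := 2 * (Z.of_nat j - Z.of_nat i) + edge_height e.

Lemma height_neighbor n i j e i' j' :
  neighbor_in n i j e = Some (i', j') -> height i' j' (opposite e) = height i j e.
Proof.
  unfold height. destruct e; cbn [opposite edge_height neighbor_in]; intros Hnb.
  - destruct i; [discriminate|]. injection Hnb as <- <-. lia.
  - destruct (S j <? n)%nat; [injection Hnb as <- <-|discriminate]. lia.
  - destruct (S i <? n)%nat; [injection Hnb as <- <-|discriminate]. lia.
  - destruct j; [discriminate|]. injection Hnb as <- <-. lia.
Qed.

Definition rise (s : step) : Z := height (si s) (sj s) (sout s) - height (si s) (sj s) (sin s).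

Lemma rise_edges s : rise s = edge_height (sout s) - edge_height (sin s).
Proof. unfold rise, height. lia. Qed.

Definition cusp (down : bool) : step -> bool := if down then down_cusp else up_cusp.

Definition base_weight (down : bool) (s : step) : Z :=
  3 * Z.b2z (cusp down s) - 5 * Z.b2z (cusp (negb down) s) +
  (if down then 1 else -1) * rise s.

Definition crossing_weight (M : mosaic) (tr : list step) (s : step) : Z :=
  Z.b2z (crossing_sign_is true M tr s) - Z.b2z (crossing_sign_is false M tr s).

Definition weight (down : bool) (M : mosaic) (tr : list step) (s : step) : Z :=
  base_weight down s + 2 * crossing_weight M tr s.

Lemma base_weight_le_2 down s : base_weight down s <= 2.
Proof.
  unfold base_weight. rewrite rise_edges.
  destruct s as [i j a b], down, a, b; cbn; lia.
Qed.

Lemma base_weight_turn_le_1 down s : sout s <> opposite (sin s) -> base_weight down s <= 1.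
Proof.
  unfold base_weight. rewrite rise_edges.
  destruct s as [i j a b], down, a, b; cbn; intros; lia || congruence.
Qed.

Lemma weight_off_crossing down M tr s :
  M (si s) (sj s) <> T10 -> weight down M tr s = base_weight down s.
Proof.
  intros HM. unfold weight, crossing_weight, crossing_sign_is.
  destruct (M (si s) (sj s)); cbn; lia || congruence.
Qed.

Lemma weight_crossing_le_2 down M tr s1 s2 i j :
  M i j = T10 -> at_cell s1 i j = true -> at_cell s2 i j = true ->
  traverses s1 (EN, ES) -> traverses s2 (EE, EW) ->
  under_WtoE tr i j = Some (is_W (sin s2)) ->
  weight down M tr s1 + weight down M tr s2 <= 2.
Proof.
  intros HM Hs1 Hs2 Ht1 Ht2 HU.
  apply at_cellP in Hs1 as [Hi1 Hj1], Hs2 as [Hi2 Hj2].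
  destruct s1 as [i1 j1 a b], s2 as [i2 j2 c d]. cbn in *. subst.
  unfold weight, crossing_weight, crossing_sign_is, base_weight. rewrite !rise_edges. cbn.
  rewrite HM, HU.
  destruct Ht1 as [H1|H1], Ht2 as [H2|H2]; injection H1 as -> ->; injection H2 as -> ->;
    destruct down; cbn; lia.
Qed.

Section Traversal.

Variables (n : nat) (M : mosaic) (tr : list step).
Hypothesis Htr : oriented_knot_traversal n M tr.

Lemma traversal_rise_sum : trsum tr rise = 0.
Proof.
  destruct Htr as [Hne [_ [Hnext _]]].
  assert (Hlen : (0 < length tr)%nat) by (destruct tr; [congruence|cbn; lia]).
  set (h_in := fun k => height (si (nth k tr dstep)) (sj (nth k tr dstep)) (sin (nth k tr dstep))).
  unfold trsum, rise.
  rewrite (sumZ_ext _ (fun k => h_in ((k + 1) mod length tr)%nat - h_in k)).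
  - rewrite sumZ_sub, (sumZ_rotate h_in _ Hlen). lia.
  - intros k Hk. destruct (Hnext k Hk) as [Hnb Hin]. unfold h_in.
    rewrite Hin, (height_neighbor _ _ _ _ _ _ Hnb). reflexivity.
Qed.

Lemma traversal_by_cells w : trsum tr w = sumZ (fun i => sumZ (fun j => cell_sum tr w i j) n) n.
Proof.
  apply trsum_by_cells. intros k Hk.
  destruct Htr as [_ [Hvalid _]]. destruct (Hvalid k Hk) as [Hi [Hj _]]. auto.
Qed.

Lemma step_in_cell k i j :
  (k < length tr)%nat -> at_cell (nth k tr dstep) i j = true ->
  exists ab, In ab (arcs (M i j)) /\ traverses (nth k tr dstep) ab.
Proof.
  intros Hk Hcell. apply at_cellP in Hcell as [<- <-].
  destruct Htr as [_ [Hvalid _]]. apply Hvalid, Hk.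
Qed.

Lemma arc_traversed_once i j ab :
  (i < n)%nat -> (j < n)%nat -> In ab (arcs (M i j)) ->
  exists! k, (k < length tr)%nat /\ at_cell (nth k tr dstep) i j = true /\
             traverses (nth k tr dstep) ab.
Proof.
  intros Hi Hj Hab. destruct Htr as [_ [_ [_ Hcover]]].
  destruct (Hcover i j ab Hi Hj Hab) as [k [Hk Huniq]].
  exists k. split.
  - destruct Hk as [Hk [Hsi [Hsj Hab']]]. repeat split; auto. apply at_cellP. auto.
  - intros k' [Hk' [Hcell Hab']]. apply at_cellP in Hcell as [Hsi Hsj]. apply Huniq. auto.
Qed.

Lemma cell_sum_nil w i j : arcs (M i j) = [] -> cell_sum tr w i j = 0.
Proof.
  intros Hnil. unfold cell_sum, trsum.
  rewrite (sumZ_ext _ (fun _ => 0)), sumZ_const; [lia|].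
  intros k Hk. destruct (at_cell (nth k tr dstep) i j) eqn:Hcell; [|reflexivity].
  destruct (step_in_cell k i j Hk Hcell) as [ab [Hab _]]. rewrite Hnil in Hab. destruct Hab.
Qed.

Lemma cell_sum_single w i j ab :
  (i < n)%nat -> (j < n)%nat -> arcs (M i j) = [ab] ->
  exists s, at_cell s i j = true /\ traverses s ab /\ cell_sum tr w i j = w s.
Proof.
  intros Hi Hj Harcs.
  assert (Hab : In ab (arcs (M i j))) by (rewrite Harcs; left; reflexivity).
  destruct (arc_traversed_once i j ab Hi Hj Hab) as [k1 [[Hk1 [Hcell1 Ht1]] Huniq]].
  exists (nth k1 tr dstep). repeat split; auto.
  unfold cell_sum, trsum. cbv beta.
  apply (sumZ_select1 (fun k => at_cell (nth k tr dstep) i j) (fun k => w (nth k tr dstep)));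
    [exact Hk1|].
  intros k Hk. split; [|intros ->; exact Hcell1].
  intros Hcell. destruct (step_in_cell k i j Hk Hcell) as [ab' [Hab' Ht]].
  rewrite Harcs in Hab'. destruct Hab' as [<-|[]]. symmetry. apply Huniq. auto.
Qed.

Lemma cell_sum_pair w i j a b c d :
  (i < n)%nat -> (j < n)%nat -> arcs (M i j) = [(a, b); (c, d)] -> a <> c -> a <> d ->
  exists s1 s2, In s2 tr /\ at_cell s1 i j = true /\ at_cell s2 i j = true /\
    traverses s1 (a, b) /\ traverses s2 (c, d) /\ cell_sum tr w i j = w s1 + w s2.
Proof.
  intros Hi Hj Harcs Hac Had.
  assert (Hab : In (a, b) (arcs (M i j))) by (rewrite Harcs; left; reflexivity).
  assert (Hcd : In (c, d) (arcs (M i j))) by (rewrite Harcs; right; left; reflexivity).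
  destruct (arc_traversed_once i j _ Hi Hj Hab) as [k1 [[Hk1 [Hcell1 Ht1]] Huniq1]].
  destruct (arc_traversed_once i j _ Hi Hj Hcd) as [k2 [[Hk2 [Hcell2 Ht2]] Huniq2]].
  assert (Hk12 : k1 <> k2).
  { intros <-. exact (traverses_disjoint _ _ _ _ _ Hac Had Ht1 Ht2). }
  exists (nth k1 tr dstep), (nth k2 tr dstep). repeat split; auto using nth_In.
  unfold cell_sum, trsum. cbv beta.
  apply (sumZ_select2 (fun k => at_cell (nth k tr dstep) i j) (fun k => w (nth k tr dstep)));
    auto.
  intros k Hk. split; [|intros [->| ->]; assumption].
  intros Hcell. destruct (step_in_cell k i j Hk Hcell) as [ab' [Hab' Ht]].
  rewrite Harcs in Hab'. destruct Hab' as [<-|[<-|[]]].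
  - left. symmetry. apply Huniq1. auto.
  - right. symmetry. apply Huniq2. auto.
Qed.

Lemma under_WtoE_crossing i j s :
  (i < n)%nat -> (j < n)%nat -> M i j = T10 ->
  In s tr -> at_cell s i j = true -> traverses s (EE, EW) ->
  under_WtoE tr i j = Some (is_W (sin s)).
Proof.
  intros Hi Hj HM Hs Hcell Ht.
  assert (Harc : In (EE, EW) (arcs (M i j))) by (rewrite HM; right; left; reflexivity).
  destruct (arc_traversed_once i j _ Hi Hj Harc) as [k0 [_ Huniq]].
  assert (Hunder : forall s', In s' tr -> at_cell s' i j = true -> is_EorW (sin s') = true ->
                              s' = s).
  { intros s' Hs' Hcell' Hew.
    apply In_nth with (d := dstep) in Hs as [k [Hk <-]].
    apply In_nth with (d := dstep) in Hs' as [k' [Hk' <-]].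
    destruct (step_in_cell k' i j Hk' Hcell') as [ab [Hab Ht']].
    rewrite HM in Hab. destruct Hab as [<-|[<-|[]]].
    - destruct (traverses_sin _ _ _ Ht') as [Hin|Hin]; rewrite Hin in Hew; discriminate.
    - f_equal. transitivity k0; [symmetry|]; apply Huniq; auto. }
  unfold under_WtoE. destruct (find _ tr) as [s'|] eqn:Hfind.
  - apply find_some in Hfind as [Hs' Hp].
    change (at_cell s' i j && is_EorW (sin s') = true) in Hp.
    apply andb_prop in Hp as [Hcell' Hew]. rewrite (Hunder s' Hs' Hcell' Hew). reflexivity.
  - apply (find_none _ _ Hfind) in Hs.
    change (at_cell s i j && is_EorW (sin s) = false) in Hs.
    rewrite Hcell in Hs. destruct (traverses_sin _ _ _ Ht) as [Hin|Hin];
      rewrite Hin in Hs; discriminate.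
Qed.

Lemma cell_weight_single_le_2 down i j ab :
  (i < n)%nat -> (j < n)%nat -> arcs (M i j) = [ab] -> M i j <> T10 ->
  cell_sum tr (weight down M tr) i j <= 2.
Proof.
  intros Hi Hj Harcs HM.
  destruct (cell_sum_single (weight down M tr) i j ab Hi Hj Harcs) as [s [Hs [_ ->]]].
  apply at_cellP in Hs as [Hsi Hsj].
  rewrite weight_off_crossing by congruence. apply base_weight_le_2.
Qed.

Lemma cell_weight_turns_le_2 down i j a b c d :
  (i < n)%nat -> (j < n)%nat -> arcs (M i j) = [(a, b); (c, d)] -> M i j <> T10 ->
  a <> c -> a <> d -> b <> opposite a -> d <> opposite c ->
  cell_sum tr (weight down M tr) i j <= 2.
Proof.
  intros Hi Hj Harcs HM Hac Had Hab Hcd.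
  destruct (cell_sum_pair (weight down M tr) i j a b c d Hi Hj Harcs Hac Had)
    as [s1 [s2 [_ [Hs1 [Hs2 [Ht1 [Ht2 ->]]]]]]].
  apply at_cellP in Hs1 as [Hsi1 Hsj1], Hs2 as [Hsi2 Hsj2].
  rewrite !weight_off_crossing by congruence.
  pose proof (base_weight_turn_le_1 down s1 (traverses_turn _ _ _ Ht1 Hab)).
  pose proof (base_weight_turn_le_1 down s2 (traverses_turn _ _ _ Ht2 Hcd)).
  lia.
Qed.

Lemma cell_weight_crossing_le_2 down i j :
  (i < n)%nat -> (j < n)%nat -> M i j = T10 -> cell_sum tr (weight down M tr) i j <= 2.
Proof.
  intros Hi Hj HM.
  assert (Harcs : arcs (M i j) = [(EN, ES); (EE, EW)]) by (rewrite HM; reflexivity).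
  destruct (cell_sum_pair (weight down M tr) i j _ _ _ _ Hi Hj Harcs ltac:(discriminate)
              ltac:(discriminate)) as [s1 [s2 [Hs2 [Hcell1 [Hcell2 [Ht1 [Ht2 ->]]]]]]].
  apply (weight_crossing_le_2 down M tr s1 s2 i j); auto.
  apply (under_WtoE_crossing i j); auto.
Qed.

Lemma cell_weight_le_2 down i j :
  (i < n)%nat -> (j < n)%nat -> cell_sum tr (weight down M tr) i j <= 2.
Proof.
  intros Hi Hj. destruct (M i j) eqn:HM.
  1: rewrite cell_sum_nil by (rewrite HM; reflexivity); lia.
  1-6: eapply cell_weight_single_le_2; eauto; rewrite HM; [reflexivity | discriminate].
  1-2: eapply cell_weight_turns_le_2; eauto; rewrite ?HM; reflexivity || discriminate.
  apply cell_weight_crossing_le_2; auto.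
Qed.

Lemma weighted_sum_le down : trsum tr (weight down M tr) <= 2 * (Z.of_nat n * Z.of_nat n).
Proof.
  rewrite traversal_by_cells.
  apply Z.le_trans with (sumZ (fun _ => sumZ (fun _ => 2) n) n).
  - apply sumZ_le. intros i Hi. apply sumZ_le. intros j Hj. apply cell_weight_le_2; auto.
  - rewrite !sumZ_const. lia.
Qed.

Lemma weighted_sum_eq down :
  trsum tr (weight down M tr) =
  3 * Z.of_nat (length (filter (cusp down) tr)) -
  5 * Z.of_nat (length (filter (cusp (negb down)) tr)) +
  2 * Z.of_nat (n_pos M tr) - 2 * Z.of_nat (n_neg M tr).
Proof.
  unfold weight, base_weight, crossing_weight.
  rewrite !trsum_add, !trsum_sub, !trsum_scal, !trsum_sub, !trsum_count.
  rewrite traversal_rise_sum. unfold n_pos, n_neg. lia.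
Qed.

Lemma tb_plus_4rot_le (down : bool) :
  (tb M tr + 4 * (if down then rot tr else - rot tr) <= INR n * INR n)%R.
Proof.
  pose proof (weighted_sum_le down) as Hle. rewrite weighted_sum_eq in Hle.
  apply IZR_le in Hle.
  rewrite minus_IZR, plus_IZR, minus_IZR, !mult_IZR, <- !INR_IZR_INZ in Hle.
  unfold tb, rot, n_down, n_up. rewrite plus_INR.
  destruct down; cbn [cusp negb] in Hle; lra.
Qed.

Lemma tb_plus_4_abs_rot_le : (4 * Rabs (rot tr) + tb M tr <= INR n * INR n)%R.
Proof.
  pose proof (tb_plus_4rot_le true). pose proof (tb_plus_4rot_le false).
  destruct (Rle_or_lt 0 (rot tr)).
  - rewrite Rabs_pos_eq by assumption. lra.
  - rewrite Rabs_left by assumption. lra.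
Qed.

End Traversal.

Lemma Rceil_le_INR (y : R) (n : nat) : (y <= INR n)%R -> Rceil y <= Z.of_nat n.
Proof.
  intros Hy. unfold Rceil, Int_part. destruct (archimed (- y)) as [Hup _].
  rewrite INR_IZR_INZ in Hy.
  assert (Hlt : (IZR (- Z.of_nat n) < IZR (up (- y)))%R) by (rewrite opp_IZR; lra).
  apply lt_IZR in Hlt. lia.
Qed.

Theorem theorem2p3 (n : nat) (M : mosaic) (tr : list step) :
  suitably_connected n M ->
  oriented_knot_traversal n M tr ->
  (0 <= 4 * Rabs (rot tr) + tb M tr)%R ->
  (Rceil (sqrt (4 * Rabs (rot tr) + tb M tr)) <= Z.of_nat n)%Z.
Proof.
  intros _ Htr _.
  apply Rceil_le_INR.
  rewrite <- (sqrt_square (INR n)) by apply pos_INR.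
  apply sqrt_le_1_alt, tb_plus_4_abs_rot_le, Htr.
Qed.
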